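(* Let $I$ be a monomial ideal of $R=K[x_1,\ldots,x_d]$ ($K$ a field) and $r\in\mathbb{R}$, $r\ge 0$. Consider the following procedure (the Staircase algorithm). If $d=1$, output $\{x_1^{\min(\mathcal{V},1)}\}$. If $d\ge2$, initialize an empty output list and let StartPoints be the set of lattice points $\mathbf{a}\in\operatorname{hype}(I,r)\cap\mathbb{Z}^d$ with $a_{d-1}=\min(\mathcal{V},d-1)$ and $a_d=\max(\mathcal{V},d)$. For each $\mathbf{a}\in$ StartPoints: set $\mathbf{b}:=\mathbf{a}$; while $\mathbf{a}\in\operatorname{hype}(I,r)$, do the following: if $\mathbf{a}\in r\cdot NP(I)$, set $\mathbf{b}:=\mathbf{a}$ and then $\mathbf{a}:=\mathbf{a}-\mathbf{e}_d$; otherwise, if $\mathbf{b}\in r\cdot NP(I)$ append $\mathbf{x}^{\mathbf{b}}$ to the output, then set $\mathbf{b}:=\mathbf{a}$ and $\mathbf{a}:=\mathbf{a}+\mathbf{e}_{d-1}$. After the while loop ends, if $\mathbf{b}\in r\cdot NP(I)$ append $\mathbf{x}^{\mathbf{b}}$ to the output. Finally return the output list. If $d\in\{1,2\}$, this procedure returns a minimal set of monomial generators of $\overline{I^r}$. If $d\ge3$, it returns a (not necessarily minimal) set of monomial generators of $\overline{I^r}$.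
   Context: $\mathbb{N}$ denotes the non-negative integers, $\mathbf{x}^{\mathbf{a}}=x_1^{a_1}\cdots x_d^{a_d}$, and $\mathbf{e}_i$ is the $i$-th standard basis vector. $G(I)$ is the minimal monomial generating set of $I$. $NP(I)$ is the convex hull in $\mathbb{R}^d$ of $\{\mathbf{a}\in\mathbb{N}^d\mid \mathbf{x}^{\mathbf{a}}\in I\}$, and $r\cdot NP(I)=\{r\mathbf{v}\mid\mathbf{v}\in NP(I)\}$. For real $r\ge0$, $\overline{I^r}=(\{\mathbf{x}^{\mathbf{a}}\mid \mathbf{a}\in r\cdot NP(I)\cap\mathbb{N}^d\})$. Let $\mathcal{V}(I,r)=\{(\lceil ra_1\rceil,\ldots,\lceil ra_d\rceil)\mid \mathbf{x}^{\mathbf{a}}\in G(I)\}$, and for $1\le i\le d$ let $\min(\mathcal{V},i)=\min_{\alpha\in\mathcal{V}(I,r)}\alpha_i$, $\max(\mathcal{V},i)=\max_{\alpha\in\mathcal{V}(I,r)}\alpha_i$. The hyperrectangle is $\operatorname{hype}(I,r)=\prod_{i=1}^d[\min(\mathcal{V},i),\max(\mathcal{V},i)]$. *)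

From HB Require Import structures.
From mathcomp Require Import all_boot all_order all_algebra.
From mathcomp Require Import boolp reals.
Set Implicit Arguments. Unset Strict Implicit. Unset Printing Implicit Defensive.
Import Order.TTheory GRing.Theory Num.Theory.
Local Open Scope ring_scope.

(* Exponent vectors a in N^d  (x^a = x_1^{a_1} ... x_d^{a_d}). *)
Notation expv d := {ffun 'I_d -> nat} (only parsing).
Notation ipt d := {ffun 'I_d -> int} (only parsing).

Section Staircase.
Variables (R : realType) (d : nat).
Local Notation expv := (expv d).
Local Notation ipt := (ipt d).

Definition divides (a b : expv) : bool := [forall i, (a i <= b i)%N].

(* A monomial ideal I is given by a finite set g of monomial generators
   (every monomial ideal is finitely generated).  Its set of exponents: *)
Definition in_ideal (g : seq expv) (a : expv) : bool := has (fun b => divides b a) g.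

Definition mingens (g : seq expv) : seq expv :=
  undup [seq a <- g | ~~ has (fun b => divides b a && (b != a)) g].

(* Newton polyhedron NP(I): convex hull in R^d of the exponents of I
   (finite convex combinations). *)
Definition in_NP (g : seq expv) (u : 'I_d -> R) : Prop :=
  exists s : seq (R * expv),
    [/\ all (fun p => in_ideal g p.2) s,
        all (fun p => 0 <= p.1) s,
        \sum_(p <- s) p.1 = 1 &
        forall i, u i = \sum_(p <- s) p.1 * ((p.2 i)%:R)].

Definition in_rNP (g : seq expv) (r : R) (v : 'I_d -> R) : Prop :=
  exists u, in_NP g u /\ forall i, v i = r * u i.

(* exponents of the integral closure overline{I^r}: multiples of lattice
   points of r*NP(I) ∩ N^d *)
Definition in_intclos (g : seq expv) (r : R) (c : expv) : Prop :=
  exists a : expv, in_rNP g r (fun i => (a i)%:R) /\ divides a c.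

Definition generates (S : seq expv) (J : expv -> Prop) : Prop :=
  forall c, J c <-> has (fun s => divides s c) S.

Definition minimal_generates (S : seq expv) (J : expv -> Prop) : Prop :=
  generates S J /\ forall s, s \in S -> ~ generates [seq t <- S | t != s] J.

Variables (g : seq expv) (r : R).

Definition Vset : seq ipt :=
  [seq [ffun i => Num.ceil (r * ((a i)%:R))] | a : expv <- mingens g].

Definition minV (i : 'I_d) : int :=
  \big[Num.min/ (head 0 [seq (v : ipt) i | v <- Vset])]_(v <- (Vset : seq ipt)) v i.
Definition maxV (i : 'I_d) : int :=
  \big[Num.max/ (head 0 [seq (v : ipt) i | v <- Vset])]_(v <- (Vset : seq ipt)) v i.

Definition in_hype (a : ipt) : bool := [forall i, (minV i <= a i <= maxV i)].

Definition inrNPb (a : ipt) : bool := `[< in_rNP g r (fun i => (a i)%:~R) >].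

(* a + c * e_j, coordinates numbered from 0, so e_d is j = d.-1 and
   e_{d-1} is j = d.-2 *)
Definition shift (a : ipt) (j : nat) (c : int) : ipt :=
  [ffun i => if val i == j then a i + c else a i].

Definition toexp (a : ipt) : expv := [ffun i => absz (a i)].

Definition Bnd : nat := \max_(i < d) absz (maxV i).

Definition emit (b : ipt) : seq expv := if inrNPb b then [:: toexp b] else [::].

(* the while loop; [n] is fuel, always sufficient (see loop_fuel) since each
   iteration either decreases a_d or increases a_{d-1}, both confined to
   [0, Bnd] while a stays in hype *)
Fixpoint loop (n : nat) (a b : ipt) : seq expv :=
  match n with
  | 0 => emit b
  | n'.+1 =>
    if in_hype a then
      if inrNPb a then loop n' (shift a d.-1 (-1)) a
      else emit b ++ loop n' (shift a d.-2 1) a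
    else emit b
  end.

Definition loop_fuel : nat := 4 * (Bnd.+1).

Definition startpoints : seq ipt :=
  [seq a <- [seq [ffun i => ((f i : nat)%:Z)] | f : {ffun 'I_d -> 'I_(Bnd.+1)}]
     | [&& in_hype a,
           [forall i, (val i == d.-2)%N ==> (a i == minV i)] &
           [forall i, (val i == d.-1)%N ==> (a i == maxV i)]]].

Definition staircase : seq expv :=
  if d == 1%N then [:: [ffun i => absz (minV i)]]
  else flatten [seq loop loop_fuel a a | a <- startpoints].

End Staircase.

(* NP(I) is convex and stable under adding the positive orthant, so the
   lattice points of r NP(I) form an upward-closed set, and each of them lies
   above one in hype(I,r).  For such a point c, the walk from the start point
   sharing the first d - 2 coordinates of c goes down in x_d and right in
   x_{d-1} without ever passing c, so it emits a divisor of x^c.  For d = 2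
   there is a single start point, and the emitted exponents strictly increase
   in x_1 and strictly decrease in x_2, so none divides another. *)

From HB Require Import structures.
From mathcomp Require Import all_boot all_order all_algebra.
From mathcomp Require Import boolp reals.
From mathcomp Require Import ring lra zify.
Import Order.TTheory GRing.Theory Num.Theory.
Local Open Scope ring_scope.
Set Implicit Arguments. Unset Strict Implicit.

Section Divisibility.
Variable d : nat.
Implicit Types (a b c e m : expv d) (g S : seq (expv d)).

Lemma divides_refl a : divides a a.
Proof. exact/forallP. Qed.

Lemma divides_trans a b c : divides a b -> divides b c -> divides a c.
Proof.
by move=> /forallP ab /forallP bc; apply/forallP => k; apply: leq_trans (ab k) (bc k).
Qed.

Definition degree a := (\sum_(i < d) a i)%N.

Lemma degree_lt a b : divides a b -> a != b -> (degree a < degree b)%N.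
Proof.
move=> /forallP ab neq_ab; have [k neq_k] : exists k, a k != b k.
  apply/existsP; apply: contraNT neq_ab; rewrite negb_exists => /forallP eq_ab.
  by apply/eqP/ffunP => k; apply/eqP/negPn.
have lt_k : (a k < b k)%N by rewrite ltn_neqAle neq_k ab.
rewrite /degree (bigD1 k) // [X in (_ < X)%N](bigD1 k) //= -addSn.
by rewrite leq_add // leq_sum.
Qed.

Lemma in_ideal_divides g a b : in_ideal g a -> divides a b -> in_ideal g b.
Proof. by move=> /hasP[m mg ma] ab; apply/hasP; exists m => //; apply: divides_trans ab. Qed.

Lemma mingens_sub g m : m \in mingens g -> m \in g.
Proof. by rewrite mem_undup mem_filter => /andP[]. Qed.

Lemma mingens_divides g e : in_ideal g e -> exists2 m, m \in mingens g & divides m e.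
Proof.
move=> /hasP[b bg be]; suff [m mm mb] : exists2 m, m \in mingens g & divides m b.
  by exists m => //; apply: divides_trans be.
elim: {be}(degree b).+1 {-2}b (ltnSn (degree b)) bg => // n IH {}b lt_bn bg.
case min_b: (has (fun b' => divides b' b && (b' != b)) g); last first.
  by exists b; rewrite ?divides_refl // mem_undup mem_filter min_b bg.
have /hasP[b' b'g /andP[b'b b'_neq]] := min_b.
have [m mm mb'] := IH b' (leq_trans (degree_lt b'b b'_neq) lt_bn) b'g.
by exists m => //; apply: divides_trans b'b.
Qed.

Lemma mingens_neq0 g : g != [::] -> mingens g != [::].
Proof.
case: g => // e g _; have [m mm _] : exists2 m, m \in mingens (e :: g) & divides m e.
  by apply: mingens_divides; apply/hasP; exists e; rewrite ?mem_head ?divides_refl.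
by apply: contraTneq mm => ->.
Qed.

Definition mingen_below g e := head e [seq m <- mingens g | divides m e].

Lemma mingen_belowP g e :
  in_ideal g e -> mingen_below g e \in mingens g /\ divides (mingen_below g e) e.
Proof.
move=> /mingens_divides[m mm me]; rewrite /mingen_below.
have : m \in [seq m <- mingens g | divides m e] by rewrite mem_filter me mm.
case E: [seq _ <- _ | _] => [|m' s] //= _.
by have := mem_head m' s; rewrite -E mem_filter => /andP[].
Qed.

Lemma minimal_generates_antichain S (J : expv d -> Prop) :
  generates S J -> {in S &, forall s t, divides s t -> s = t} ->
  minimal_generates S J.
Proof.
move=> genS antiS; split => // s sS genS'.
have Js : J s by apply/(genS s)/hasP; exists s; rewrite ?divides_refl.
have /hasP[t] := (genS' s).1 Js; rewrite mem_filter => /andP[t_neq tS] ts.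
by rewrite (antiS t s) ?eqxx in t_neq.
Qed.

End Divisibility.

Section LatticePoints.
Variable d : nat.
Implicit Types (a b c : ipt d) (j k : 'I_d).

Lemma shift_ne a j k x : k != j -> shift a (val j) x k = a k.
Proof. by move=> /negbTE kj; rewrite ffunE (inj_eq val_inj) kj. Qed.

Lemma shift_eq a j x : shift a (val j) x j = a j + x.
Proof. by rewrite ffunE eqxx. Qed.

Lemma shift_down_le a (j : nat) k : shift a j (-1) k <= a k.
Proof. by rewrite ffunE; case: ifP; rewrite ?gerDl. Qed.

Lemma divides_toexp b c :
  (forall k, 0 <= b k) -> (forall k, b k <= c k) -> divides (toexp b) (toexp c).
Proof.
move=> b_ge0 le_bc; apply/forallP => k; rewrite !ffunE.
by have := b_ge0 k; have := le_bc k; lia.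
Qed.

End LatticePoints.

Section ConvexCombinations.
Variables (R : numDomainType) (I : eqType) (s : seq I) (w x : I -> R).
Hypotheses (w_ge0 : {in s, forall i, 0 <= w i}) (w_sum1 : \sum_(i <- s) w i = 1).

Lemma convex_comb_gt c : {in s, forall i, c < x i} -> c < \sum_(i <- s) w i * x i.
Proof.
move=> x_gt; rewrite -subr_gt0.
have -> : \sum_(i <- s) w i * x i - c = \sum_(i <- s) w i * (x i - c).
  by rewrite -[c]mul1r -{1}w_sum1 mulr_suml -sumrB; apply: eq_bigr => i _; ring.
have terms_ge0 i : i \in s -> 0 <= w i * (x i - c).
  by move=> si; rewrite mulr_ge0 ?w_ge0 // subr_ge0 ltW ?x_gt.
have /hasP[i si /andP[_ wi_gt0]] : has (fun i => (i \in s) && (0 < w i)) s.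
  by rewrite -psumr_neq0 -?big_seq ?w_sum1 ?oner_neq0 // => i /w_ge0.
rewrite lt_def big_seq psumr_neq0 => [|j /terms_ge0] //; apply/andP; split.
  by apply/hasP; exists i; rewrite // si mulr_gt0 // subr_gt0 x_gt.
by apply: sumr_ge0 => j /terms_ge0.
Qed.

Lemma convex_comb_le c : {in s, forall i, x i <= c} -> \sum_(i <- s) w i * x i <= c.
Proof.
move=> x_le; rewrite -[c]mul1r -w_sum1 mulr_suml !big_seq.
by apply: ler_sum => i si; rewrite ler_wpM2l ?w_ge0 ?x_le.
Qed.

End ConvexCombinations.

Section NewtonPolyhedron.
Variables (R : realType) (d : nat) (g : seq (expv d)).
Implicit Types (u t : 'I_d -> R) (e : expv d).

Lemma in_NP_ge0 u k : in_NP g u -> 0 <= u k.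
Proof.
move=> [s [_ w_ge0 _ ->]]; rewrite big_seq sumr_ge0 // => p sp.
by rewrite mulr_ge0 // (allP w_ge0 p sp).
Qed.

Lemma in_NP_ideal e : in_ideal g e -> in_NP g (fun i => (e i)%:R : R).
Proof.
move=> ge; exists [:: (1, e)]; split => [|||i]; rewrite /= ?ge ?ler01 ?big_seq1 //.
by rewrite mul1r.
Qed.

(* Write t = m + f with m integral and 0 <= f < 1, and move each exponent up
   by m in coordinate i with weight 1 - f, and by m + 1 with weight f. *)
Lemma in_NP_add_coord u i (t : R) :
  in_NP g u -> 0 <= t -> in_NP g (fun k => u k + (if k == i then t else 0)).
Proof.
move=> [s [s_ideal w_ge0 w_sum1 u_def]] t_ge0.
pose m := Num.truncn t; pose f := t - m%:R.
have /andP[m_le m_gt] := truncn_itv t_ge0.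
have f_ge0 : 0 <= f by rewrite subr_ge0.
have f_le1 : 0 <= 1 - f by rewrite -natr1 in m_gt; rewrite /f; lra.
pose up n e : expv d := [ffun k => (e k + (if k == i then n else 0))%N].
exists ([seq (p.1 * (1 - f), up m p.2) | p <- s] ++
        [seq (p.1 * f, up m.+1 p.2) | p <- s]); split.
- rewrite all_cat !all_map; apply/andP; split; apply/allP => p sp /=;
    apply: in_ideal_divides (allP s_ideal p sp) _; apply/forallP => k;
    by rewrite ffunE leq_addr.
- rewrite all_cat !all_map; apply/andP; split; apply/allP => p sp /=;
    by rewrite mulr_ge0 // (allP w_ge0 p sp).
- by rewrite big_cat !big_map /= -!mulr_suml w_sum1; ring.
- move=> k; rewrite big_cat !big_map /= -big_split /= u_def.
  have -> : (if k == i then t else 0) = \sum_(p <- s) p.1 * (if k == i then t else 0).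
    by rewrite -mulr_suml w_sum1 mul1r.
  rewrite -big_split /=.
  apply: eq_bigr => p _; rewrite !ffunE.
  by case: (k == i); rewrite ?addn0 ?natrD /f -?natr1; ring.
Qed.

Lemma in_NP_addr u t : in_NP g u -> (forall k, 0 <= t k) -> in_NP g (fun k => u k + t k).
Proof.
move=> NPu t_ge0.
suff NP_partial (s : seq 'I_d) :
    in_NP g (fun k => u k + \sum_(i <- s) (if k == i then t i else 0)).
  have := NP_partial (enum 'I_d); congr in_NP; apply: funext => k.
  by rewrite big_enum -big_mkcond (big_pred1 k) // => i; rewrite eq_sym.
elim: s => [|i s IH].
  by move: NPu; congr in_NP; apply: funext => k; rewrite big_nil addr0.
have := in_NP_add_coord i IH (t_ge0 i); congr in_NP; apply: funext => k.
by rewrite big_cons addrA addrAC.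
Qed.

End NewtonPolyhedron.

Section Hyperrectangle.
Variables (R : realType) (d : nat) (g : seq (expv d)) (r : R).
Implicit Types (i : 'I_d) (v : ipt d) (m : expv d).

Lemma minV_maxV_ind (K : int -> Prop) i :
  K 0 -> {in Vset g r, forall v, K (v i)} -> K (minV g r i) /\ K (maxV g r i).
Proof.
move=> K0 KV; have Khead : K (head 0 [seq v i | v <- Vset g r]).
  by case: (Vset g r) KV => [|v s] //= KV; apply: KV; rewrite mem_head.
by rewrite /minV /maxV !big_seq; split; apply: (big_ind K) => // x y Kx Ky; case: leP.
Qed.

Lemma minV_attained i : Vset g r != [::] -> exists2 v, v \in Vset g r & minV g r i = v i.
Proof.
move=> V_neq0; suff /mapP[v vV ->] : minV g r i \in [seq v i | v <- Vset g r] by exists v.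
rewrite /minV big_seq.
apply: (big_ind (fun z => z \in [seq v i | v <- Vset g r])) => [|x y|v vV].
- by case: (Vset g r) V_neq0 => //= v s _; rewrite mem_head.
- by case: leP.
- exact: map_f.
Qed.

Lemma minV_le v i : v \in Vset g r -> minV g r i <= v i.
Proof. by move=> vV; apply: ge_bigmin_seq. Qed.

Lemma maxV_ge v i : v \in Vset g r -> v i <= maxV g r i.
Proof. by move=> vV; apply: (le_bigmax_seq _ v xpredT (fun v : ipt d => v i)). Qed.

Lemma ceil_mem_Vset m :
  m \in mingens g -> [ffun i => Num.ceil (r * (m i)%:R)] \in Vset g r.
Proof. exact: map_f. Qed.

Lemma minV_maxV_ge0 i : 0 <= r -> 0 <= minV g r i /\ 0 <= maxV g r i.
Proof.
move=> r_ge0; apply: (minV_maxV_ind (K := fun z => 0 <= z)) => // _ /mapP[m _ ->].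
by rewrite ffunE ceil_ge0 // (lt_le_trans _ (mulr_ge0 r_ge0 (ler0n _ _))) ?ltrN10.
Qed.

Lemma maxV_r0 i : r = 0 -> maxV g r i = 0.
Proof.
move=> r0; have [] // := minV_maxV_ind (K := fun z => z = 0) (i := i) erefl.
by move=> _ /mapP[m _ ->]; rewrite ffunE r0 mul0r ceil0.
Qed.

Lemma maxV_le_Bnd i : 0 <= r -> maxV g r i <= (Bnd g r)%:Z.
Proof.
move=> r_ge0; have [_ maxV_ge0] := minV_maxV_ge0 i r_ge0.
have := @leq_bigmax _ (fun k : 'I_d => absz (maxV g r k)) i; rewrite -/(Bnd g r).
by lia.
Qed.

End Hyperrectangle.

Section ScaledNewtonPolyhedron.
Variables (R : realType) (d : nat) (g : seq (expv d)) (r : R).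
Hypothesis r_ge0 : 0 <= r.
Implicit Types (i k : 'I_d) (v : 'I_d -> R) (a c : ipt d).

Lemma in_rNP_ge0 v i : in_rNP g r v -> 0 <= v i.
Proof. by move=> [u [NPu ->]]; rewrite mulr_ge0 // (in_NP_ge0 _ NPu). Qed.

Lemma in_rNP_r0 v i : r = 0 -> in_rNP g r v -> v i = 0.
Proof. by move=> r0 [u [_ ->]]; rewrite r0 mul0r. Qed.

Lemma in_rNP_upward v v' :
  0 < r -> in_rNP g r v -> (forall k, v k <= v' k) -> in_rNP g r v'.
Proof.
move=> r_gt0 [u [NPu v_def]] le_vv'.
exists (fun k => u k + (v' k - v k) / r); split.
  by apply: in_NP_addr => // k; rewrite divr_ge0 ?subr_ge0 ?le_vv' ?ltW.
by move=> k; rewrite v_def; field; rewrite gt_eqF.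
Qed.

(* Replace, in a convex representation of u, the i-th coordinate of each
   exponent by that of a minimal generator dividing it. *)
Lemma in_NP_cap u i :
  in_NP g u -> exists u', [/\ in_NP g u', forall k, k != i -> u' k = u k
                            & r * u' i <= (maxV g r i)%:~R].
Proof.
move=> [s [s_ideal w_ge0 w_sum1 u_def]].
pose cap e : expv d := [ffun k => if k == i then mingen_below g e k else e k].
exists (fun k => \sum_(p <- s) p.1 * (cap p.2 k)%:R); split.
- exists [seq (p.1, cap p.2) | p <- s]; split => [|||k]; rewrite ?all_map ?big_map //.
  apply/allP => p sp /=; have [mm me] := mingen_belowP (allP s_ideal p sp).
  apply/hasP; exists (mingen_below g p.2); first exact: mingens_sub.
  by apply/forallP => k; rewrite ffunE; case: ifP => // _; apply: (forallP me).
- by move=> k /negbTE k_neq; rewrite u_def; apply: eq_bigr => p _; rewrite ffunE k_neq.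
rewrite mulr_sumr (eq_bigr (fun p => p.1 * (r * (mingen_below g p.2 i)%:R))) => [|p _].
  apply: convex_comb_le => // [p /(allP w_ge0) //|p sp].
  have [mm _] := mingen_belowP (allP s_ideal p sp).
  have := maxV_ge i (ceil_mem_Vset r mm); rewrite ffunE -(ler_int R).
  exact/le_trans/ceil_ge.
by rewrite ffunE eqxx mulrCA.
Qed.

Lemma inrNPbP a : reflect (in_rNP g r (fun i => (a i)%:~R)) (inrNPb g r a).
Proof. exact: asboolP. Qed.

Lemma inrNPb_ge0 a i : inrNPb g r a -> 0 <= a i.
Proof. by move=> /inrNPbP/(in_rNP_ge0 i); rewrite ler0z. Qed.

(* Each exponent e of a convex representation lies above a minimal generator
   m, and r e_i >= r m_i > ceil(r m_i) - 1 >= min(V,i) - 1. *)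
Lemma inrNPb_ge_minV a i : inrNPb g r a -> minV g r i <= a i.
Proof.
move=> /inrNPbP[u [[s [s_ideal w_ge0 w_sum1 u_def]] a_def]].
rewrite -ltzD1 -ltrBlDr -(ltr_int R) a_def u_def mulr_sumr.
rewrite (eq_bigr (fun p : R * expv d => p.1 * (r * (p.2 i)%:R))) => [|p _]; last first.
  by rewrite mulrCA.
apply: convex_comb_gt => // [p /(allP w_ge0) //|p sp].
have [m mm me] := mingens_divides (allP s_ideal p sp).
have := minV_le i (ceil_mem_Vset r mm); rewrite ffunE => minV_le_ceil.
apply: le_lt_trans (_ : (Num.ceil (r * (m i)%:R) - 1)%:~R < _).
  by rewrite ler_int lerB.
apply: lt_le_trans (ceilB1_lt _) _.
by rewrite ler_wpM2l // ler_nat (forallP me i).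
Qed.

Lemma inrNPb_upward c a :
  inrNPb g r c -> (forall k, c k <= a k <= maxV g r k) -> inrNPb g r a.
Proof.
move=> /inrNPbP NPc bounds; have [r0|r_neq0] := eqVneq r 0.
  suff -> : a = c by apply/inrNPbP.
  apply/ffunP => k; have := bounds k; rewrite maxV_r0 //.
  have /eqP := in_rNP_r0 k r0 NPc; rewrite intr_eq0 => /eqP c0 /andP[ca a0].
  by rewrite c0 in ca *; apply/eqP; rewrite eq_le a0 ca.
have r_gt0 : 0 < r by rewrite lt_def r_neq0.
apply/inrNPbP; apply: (in_rNP_upward r_gt0 NPc) => k.
by rewrite ler_int; case/andP: (bounds k).
Qed.

Lemma inrNPb_lower a i :
  inrNPb g r a -> maxV g r i < a i -> inrNPb g r (shift a (val i) (-1)).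
Proof.
move=> /inrNPbP[u [NPu a_def]] lt_a.
have [r0|r_neq0] := eqVneq r 0.
  by move: lt_a; rewrite maxV_r0 // -(ltr_int R) a_def r0 mul0r ltxx.
have r_gt0 : 0 < r by rewrite lt_def r_neq0.
have [u' [NPu' u'_eq u'_le]] := in_NP_cap i NPu.
apply/inrNPbP; apply: (in_rNP_upward r_gt0 (v := fun k => r * u' k)); first by exists u'.
move=> k; have [->|k_neq] := eqVneq k i.
  by rewrite shift_eq (le_trans u'_le) // ler_int; lia.
by rewrite shift_ne // u'_eq // a_def.
Qed.

Lemma inrNPb_below_hype a :
  inrNPb g r a -> exists2 p, inrNPb g r p && in_hype g r p & forall k, p k <= a k.
Proof.
elim: (degree (toexp a)).+1 {-2}a (ltnSn (degree (toexp a))) => // n IH {}a lt_an Pa.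
case: (boolP [exists i, maxV g r i < a i]) => [/existsP[i lt_ai] | /existsPn le_max].
  have Pa' := inrNPb_lower Pa lt_ai.
  have lt_deg : (degree (toexp (shift a (val i) (-1))) < degree (toexp a))%N.
    apply: degree_lt.
      by apply: divides_toexp => k; rewrite ?shift_down_le ?(inrNPb_ge0 _ Pa').
    apply/eqP => /ffunP/(_ i); rewrite !ffunE eqxx.
    by have := inrNPb_ge0 i Pa'; rewrite shift_eq; lia.
  have [p Pp le_p] := IH _ (leq_trans lt_deg lt_an) Pa'.
  by exists p => // k; apply: le_trans (le_p k) (shift_down_le _ _ _).
exists a => //; rewrite Pa; apply/forallP => k.
by rewrite inrNPb_ge_minV //= leNgt le_max.
Qed.

Lemma inrNPb_ceil m :
  m \in g -> inrNPb g r [ffun i => Num.ceil (r * (m i)%:R)].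
Proof.
move=> mg; have NPm : in_rNP g r (fun i => r * (m i)%:R).
  exists (fun i => (m i)%:R); split => //.
  by apply/in_NP_ideal/hasP; exists m; rewrite ?divides_refl.
have [r0|r_neq0] := eqVneq r 0.
  apply/inrNPbP; move: NPm; congr in_rNP; apply: funext => i.
  by rewrite ffunE r0 mul0r ceil0.
have r_gt0 : 0 < r by rewrite lt_def r_neq0.
by apply/inrNPbP; apply: (in_rNP_upward r_gt0 NPm) => i; rewrite ffunE ceil_ge.
Qed.

Lemma in_intclos_divides (c c' : expv d) :
  in_intclos g r c -> divides c c' -> in_intclos g r c'.
Proof. by move=> [a [NPa ac]] cc'; exists a; split => //; apply: divides_trans cc'. Qed.

Lemma in_intclos_toexp (p : ipt d) : inrNPb g r p -> in_intclos g r (toexp p).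
Proof.
move=> Pp; exists (toexp p); split; last exact: divides_refl.
move/inrNPbP: (Pp); congr in_rNP; apply: funext => i.
by rewrite ffunE natr_absz ger0_norm // inrNPb_ge0.
Qed.

Lemma in_intclos_below_hype (c : expv d) :
  in_intclos g r c -> exists2 p, inrNPb g r p && in_hype g r p & divides (toexp p) c.
Proof.
move=> [a [NPa ac]]; have Pa : inrNPb g r [ffun i => (a i)%:Z].
  by apply/inrNPbP; move: NPa; congr in_rNP; apply: funext => i; rewrite ffunE.
have [p /andP[Pp hp] le_pa] := inrNPb_below_hype Pa.
exists p; rewrite ?Pp //; apply: divides_trans ac; apply/forallP => k.
by have := le_pa k; have := inrNPb_ge0 k Pp; rewrite !ffunE; lia.
Qed.

End ScaledNewtonPolyhedron.

Section Startpoints.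
Variables (R : realType) (d : nat) (g : seq (expv d)) (r : R).
Hypothesis r_ge0 : 0 <= r.
Implicit Types (a : ipt d).

Lemma mem_hype_enum a : in_hype g r a ->
  a \in [seq [ffun i => (f i : nat)%:Z] | f : {ffun 'I_d -> 'I_(Bnd g r).+1}].
Proof.
move=> ha; have a_lt k : (absz (a k) < (Bnd g r).+1)%N.
  have /andP[lo hi] := forallP ha k; have [min_ge0 _] := minV_maxV_ge0 g k r_ge0.
  by have := maxV_le_Bnd g k r_ge0; lia.
suff -> : a = (fun f : {ffun 'I_d -> 'I_(Bnd g r).+1} => [ffun i => (f i : nat)%:Z])
                [ffun i => Ordinal (a_lt i)] by exact: image_f.
apply/ffunP => k; rewrite !ffunE /=.
by have /andP[lo _] := forallP ha k; have [min_ge0 _] := minV_maxV_ge0 g k r_ge0; lia.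
Qed.

Lemma mem_startpoints a : in_hype g r a ->
  (forall i, val i = d.-2 -> a i = minV g r i) ->
  (forall i, val i = d.-1 -> a i = maxV g r i) -> a \in startpoints g r.
Proof.
move=> ha a_min a_max; rewrite mem_filter ha mem_hype_enum // andbT /=.
apply/andP; split; apply/forallP => i; apply/implyP => /eqP i_val.
  by rewrite a_min.
by rewrite a_max.
Qed.

Lemma startpoints_d2 s1 s2 :
  d = 2 -> s1 \in startpoints g r -> s2 \in startpoints g r -> s1 = s2.
Proof.
move=> d2; rewrite !mem_filter.
move=> /andP[/and3P[_ /forallP min1 /forallP max1] _].
move=> /andP[/and3P[_ /forallP min2 /forallP max2] _].
apply/ffunP => k; have : (val k == d.-2) || (val k == d.-1) by case: k; rewrite d2 => -[|[|]].
case/orP => kd.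
  by move: (implyP (min1 k) kd) (implyP (min2 k) kd) => /eqP -> /eqP ->.
by move: (implyP (max1 k) kd) (implyP (max2 k) kd) => /eqP -> /eqP ->.
Qed.

End Startpoints.

Section StairOrder.
Variables (d : nat) (j1 j2 : 'I_d).
Implicit Types (o : expv d).

Definition stair_lt o1 o2 := (o1 j1 < o2 j1)%N && (o2 j2 < o1 j2)%N.

Lemma stair_lt_trans : transitive stair_lt.
Proof. by move=> o2 o1 o3 /andP[lt1 lt2] /andP[lt3 lt4]; apply/andP; split; lia. Qed.

Lemma sorted_stair_antichain s :
  sorted stair_lt s -> {in s &, forall o1 o2, divides o1 o2 -> o1 = o2}.
Proof.
move=> s_sorted o1 o2 o1s o2s /forallP o12.
case: (ltngtP (index o1 s) (index o2 s)) => [lt|gt|]; last exact: index_inj.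
  have /andP[_] := sorted_ltn_index stair_lt_trans s_sorted _ _ o1s o2s lt.
  by have := o12 j2; lia.
have /andP[] := sorted_ltn_index stair_lt_trans s_sorted _ _ o2s o1s gt.
by have := o12 j1; lia.
Qed.

End StairOrder.

Section StaircaseLoop.
Variables (R : realType) (d : nat) (g : seq (expv d)) (r : R) (j1 j2 : 'I_d).
Hypotheses (r_ge0 : 0 <= r) (j1_def : val j1 = d.-2) (j2_def : val j2 = d.-1).
Hypothesis j12 : j1 != j2.
Implicit Types (a b c p : ipt d) (o : expv d).

Let j21 : j2 != j1. Proof. by rewrite eq_sym. Qed.

Lemma emit_divisor b c :
  inrNPb g r b -> (forall k, b k <= c k) -> has (fun o => divides o (toexp c)) (emit g r b).
Proof.
move=> Pb le_bc; rewrite /emit Pb /= orbF.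
by apply: divides_toexp => // k; apply: inrNPb_ge0 Pb.
Qed.

Lemma loop_emits_divisor c n a b :
  inrNPb g r b -> (forall k, b k <= c k) -> (forall k, a k <= b k) ->
  has (fun o => divides o (toexp c)) (loop g r n a b).
Proof.
elim: n a b => [|n IH] a b Pb le_bc le_ab /=; first exact: emit_divisor.
case: (in_hype g r a); last exact: emit_divisor.
case Pa: (inrNPb g r a); last by rewrite has_cat emit_divisor.
apply: IH => // k; [exact: le_trans (le_ab k) (le_bc k) | exact: shift_down_le].
Qed.

Lemma in_hype_between c a :
  in_hype g r c -> (forall k, k != j1 -> k != j2 -> a k = c k) ->
  minV g r j1 <= a j1 <= c j1 -> c j2 <= a j2 <= maxV g r j2 -> in_hype g r a.
Proof.
move=> hc a_eq /andP[a1_lo a1_hi] /andP[a2_lo a2_hi]; apply/forallP => k.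
have [->|k1] := eqVneq k j1.
  by have /andP[_ c_hi] := forallP hc j1; rewrite a1_lo (le_trans a1_hi c_hi).
have [->|k2] := eqVneq k j2.
  by have /andP[c_lo _] := forallP hc j2; rewrite a2_hi andbT (le_trans c_lo a2_lo).
by rewrite a_eq //; apply: (forallP hc).
Qed.

(* The walk cannot pass c: once a_d = c_d, a point of r NP(I) is below c,
   and once a_{d-1} = c_{d-1}, the point is above c, hence in r NP(I). *)
Lemma loop_reaches_divisor c n a b :
  inrNPb g r c -> in_hype g r c -> (forall k, k != j1 -> k != j2 -> a k = c k) ->
  minV g r j1 <= a j1 <= c j1 -> c j2 <= a j2 <= maxV g r j2 ->
  (c j1 - a j1) + (a j2 - c j2) < n%:Z ->
  has (fun o => divides o (toexp c)) (loop g r n a b).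
Proof.
move=> Pc hc; elim: n a b => [|n IH] a b a_eq a1_bnd a2_bnd fuel.
  by move: a1_bnd a2_bnd fuel; lia.
have ha := in_hype_between hc a_eq a1_bnd a2_bnd.
move: a1_bnd a2_bnd => /andP[a1_lo a1_hi] /andP[a2_lo a2_hi].
rewrite /= ha -j1_def -j2_def; case Pa: (inrNPb g r a).
  have [a2_eq|a2_neq] := eqVneq (a j2) (c j2).
    apply: loop_emits_divisor => // k; last exact: shift_down_le.
    have [->|k1] := eqVneq k j1 => //; have [->|k2] := eqVneq k j2; first by rewrite a2_eq.
    by rewrite a_eq.
  apply: IH; rewrite ?shift_eq ?shift_ne ?a1_lo ?a1_hi //; try lia.
  by move=> k k1 k2; rewrite shift_ne // a_eq.
have [a1_eq|a1_neq] := eqVneq (a j1) (c j1).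
  suff : inrNPb g r a by rewrite Pa.
  apply: (inrNPb_upward r_ge0 Pc) => k; have /andP[_ ->] := forallP ha k; rewrite andbT.
  have [->|k1] := eqVneq k j1; first by rewrite a1_eq.
  by have [->|k2] := eqVneq k j2; rewrite // a_eq.
rewrite has_cat; apply/orP; right.
apply: IH; rewrite ?shift_eq ?shift_ne ?a2_lo ?a2_hi //; try lia.
by move=> k k1 k2; rewrite shift_ne // a_eq.
Qed.

Definition start_of c : ipt d :=
  [ffun k => if k == j1 then minV g r j1 else if k == j2 then maxV g r j2 else c k].

Lemma start_of_startpoints c : in_hype g r c -> start_of c \in startpoints g r.
Proof.
move=> hc; have hs : in_hype g r (start_of c).
  apply: (in_hype_between hc) => [k k1 k2||]; rewrite !ffunE ?eqxx ?(negbTE j21) ?lexx //.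
  - by rewrite (negbTE k1) (negbTE k2).
  - by have /andP[-> _] := forallP hc j1.
  - by have /andP[_ ->] := forallP hc j2.
apply: mem_startpoints => // i i_val; rewrite ffunE.
  have -> : i = j1 by apply: val_inj; rewrite i_val j1_def.
  by rewrite eqxx.
have -> : i = j2 by apply: val_inj; rewrite i_val j2_def.
by rewrite eqxx (negbTE j21).
Qed.

Lemma loop_start_divisor c :
  inrNPb g r c -> in_hype g r c ->
  has (fun o => divides o (toexp c)) (loop g r (loop_fuel g r) (start_of c) (start_of c)).
Proof.
move=> Pc hc; have /andP[c1_lo c1_hi] := forallP hc j1.
have /andP[c2_lo c2_hi] := forallP hc j2.
have [minV1_ge0 _] := minV_maxV_ge0 g j1 r_ge0; have [minV2_ge0 _] := minV_maxV_ge0 g j2 r_ge0.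
have maxV1_le := maxV_le_Bnd g j1 r_ge0; have maxV2_le := maxV_le_Bnd g j2 r_ge0.
apply: loop_reaches_divisor => //; rewrite ?ffunE ?eqxx ?(negbTE j21) ?lexx ?c1_lo ?c2_hi //.
- by move=> k k1 k2; rewrite ffunE (negbTE k1) (negbTE k2).
- by rewrite /loop_fuel; lia.
Qed.

Lemma mem_loop n a b o :
  o \in loop g r n a b ->
  exists p, [/\ inrNPb g r p, o = toexp p & p = b \/ a j1 <= p j1 /\ p j2 <= a j2].
Proof.
have out_emit a' b' : o \in emit g r b' ->
    exists p, [/\ inrNPb g r p, o = toexp p & p = b' \/ a' j1 <= p j1 /\ p j2 <= a' j2].
  by rewrite /emit; case: ifP => // Pb; rewrite inE => /eqP ->; exists b'; split => //; left.
elim: n a b => [|n IH] a b /=; first exact: out_emit.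
case: (in_hype g r a); last exact: out_emit.
rewrite -j1_def -j2_def; case Pa: (inrNPb g r a).
  move=> /IH[p [Pp -> p_pos]]; exists p; split => //; right.
  by case: p_pos => [->|]; rewrite ?shift_eq ?shift_ne //; lia.
rewrite mem_cat => /orP[/(out_emit a) //|/IH[p [Pp -> p_pos]]].
exists p; split => //; right.
by case: p_pos => [pa|]; [rewrite pa Pa in Pp | rewrite shift_eq shift_ne //; lia].
Qed.

Lemma loop_sorted n a b :
  (inrNPb g r b -> b = a \/ b j1 = a j1 /\ b j2 = a j2 + 1) ->
  sorted (stair_lt j1 j2) (loop g r n a b).
Proof.
have sorted_emit b' : sorted (stair_lt j1 j2) (emit g r b') by rewrite /emit; case: ifP.
elim: n a b => [|n IH] a b b_pos /=; first exact: sorted_emit.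
case: (in_hype g r a); last exact: sorted_emit.
rewrite -j1_def -j2_def; case Pa: (inrNPb g r a).
  by apply: IH => _; right; rewrite shift_ne // shift_eq; split => //; lia.
rewrite /emit; case Pb: (inrNPb g r b) => /=; last by apply: IH => Pa'; rewrite Pa' in Pa.
have [ba|[b1 b2]] := b_pos Pb; first by rewrite ba Pa in Pb.
rewrite (path_sortedE (@stair_lt_trans _ j1 j2)) IH ?andbT => [|Pa'];
  last by rewrite Pa' in Pa.
apply/allP => o /mem_loop[p [Pp -> [pa|]]]; first by rewrite pa Pa in Pp.
rewrite shift_eq shift_ne // /stair_lt !ffunE => -[p1 p2].
have := inrNPb_ge0 r_ge0 j1 Pp; have := inrNPb_ge0 r_ge0 j2 Pp.
have := inrNPb_ge0 r_ge0 j1 Pb; have := inrNPb_ge0 r_ge0 j2 Pb.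
by move=> *; apply/andP; split; lia.
Qed.

End StaircaseLoop.

Section Staircase.
Variables (R : realType) (d : nat) (g : seq (expv d)) (r : R).
Hypothesis r_ge0 : 0 <= r.

Lemma staircase_ordinals :
  (2 <= d)%N -> exists j1 j2 : 'I_d, [/\ val j1 = d.-2, val j2 = d.-1 & j1 != j2].
Proof.
move=> d_ge2; have lt1 : (d.-2 < d)%N by lia.
have lt2 : (d.-1 < d)%N by lia.
by exists (Ordinal lt1), (Ordinal lt2); split => //; apply/eqP => /(congr1 val) /=; lia.
Qed.

Lemma staircaseE :
  d != 1%N ->
  staircase g r = flatten [seq loop g r (loop_fuel g r) a a | a <- startpoints g r].
Proof. by move=> /negbTE d_neq1; rewrite /staircase d_neq1. Qed.

Lemma staircase_generates : (2 <= d)%N -> generates (staircase g r) (in_intclos g r).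
Proof.
move=> d_ge2; have [j1 [j2 [j1_def j2_def j12]]] := staircase_ordinals d_ge2.
rewrite staircaseE ?gtn_eqF //.
move=> c; split.
  move=> /(in_intclos_below_hype r_ge0)[p /andP[Pp hp] pc].
  have /hasP[o o_out op] := loop_start_divisor r_ge0 j1_def j2_def j12 Pp hp.
  apply/hasP; exists o; last exact: divides_trans pc.
  by apply/flatten_mapP; exists (start_of g r j1 j2 p); rewrite ?start_of_startpoints.
move=> /hasP[o /flatten_mapP[a _ o_out] oc].
have [p [Pp o_def _]] := mem_loop r_ge0 j1_def j2_def j12 o_out.
by apply: in_intclos_divides oc; rewrite o_def; apply: in_intclos_toexp.
Qed.

Lemma staircase_antichain :
  d = 2%N -> {in staircase g r &, forall s t, divides s t -> s = t}.
Proof.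
move=> d2; have [j1 [j2 [j1_def j2_def j12]]] := staircase_ordinals (eq_leq (esym d2)).
move=> s t; rewrite staircaseE; last by rewrite d2.
move=> /flatten_mapP[a1 a1_start s_out] /flatten_mapP[a2 a2_start t_out].
rewrite -(startpoints_d2 d2 a1_start a2_start) in t_out.
have sorted_out : sorted (stair_lt j1 j2) (loop g r (loop_fuel g r) a1 a1).
  by apply: loop_sorted => // _; left.
exact: sorted_stair_antichain sorted_out _ _ s_out t_out.
Qed.

End Staircase.

Lemma staircase_d1 (R : realType) (g : seq (expv 1)) (r : R) :
  g != [::] -> 0 <= r -> minimal_generates (staircase g r) (in_intclos g r).
Proof.
move=> g_neq0 r_ge0.
have V_neq0 : Vset g r != [::] by rewrite /Vset; case: (mingens g) (mingens_neq0 g_neq0).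
pose p : ipt 1 := [ffun i => minV g r i].
have Pp : inrNPb g r p.
  have [_ /mapP[m mm ->] min_eq] := minV_attained ord0 V_neq0.
  suff -> : p = [ffun i => Num.ceil (r * (m i)%:R)] by apply/inrNPb_ceil/mingens_sub.
  by apply/ffunP => i; rewrite ffunE (ord1 i) min_eq.
have -> : staircase g r = [:: toexp p] by congr [:: _]; apply/ffunP => i; rewrite !ffunE.
apply: minimal_generates_antichain => [c|s t]; last by rewrite !inE => /eqP-> /eqP->.
rewrite /= orbF; split; last exact: in_intclos_divides (in_intclos_toexp r_ge0 Pp).
move=> /(in_intclos_below_hype r_ge0)[q /andP[Pq _] qc]; apply: divides_trans qc.
apply: divides_toexp => k; rewrite ffunE; last exact: inrNPb_ge_minV.
by have [] := minV_maxV_ge0 g k r_ge0.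
Qed.

Theorem proposition4p9 (R : realType) (d : nat) (g : seq (expv d)) (r : R) :
  (1 <= d)%N -> g != [::] -> 0 <= r ->
  generates (staircase g r) (in_intclos g r) /\
  ((d <= 2)%N -> minimal_generates (staircase g r) (in_intclos g r)).
Proof.
move=> d_ge1 g_neq0 r_ge0; have [d1|d_neq1] := eqVneq d 1%N.
  subst d; have min_gen := staircase_d1 g_neq0 r_ge0.
  by split => //; case: min_gen.
have d_ge2 : (2 <= d)%N by rewrite ltn_neqAle eq_sym d_neq1.
split => [|d_le2]; first exact: staircase_generates.
apply: minimal_generates_antichain; first exact: staircase_generates.
by apply: staircase_antichain => //; apply/eqP; rewrite eqn_leq d_le2.
Qed.
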